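(* Let $S$ be a $\Gamma$-hemiring, let $\mu$ be a prime fuzzy h-ideal of $S$ and let $x\in\mu_0$. Then $\langle x,\mu\rangle=\mathbf{1}_S$, the constant function with value $1$ on $S$.
   Context: A $\Gamma$-hemiring is a pair of additive commutative semigroups with zero $S$ and $\Gamma$ with a map $S\times\Gamma\times S\to S$, $(a,\alpha,b)\mapsto a\alpha b$, such that for all $a,b,c\in S$, $\alpha,\beta\in\Gamma$: $(a+b)\alpha c=a\alpha c+b\alpha c$; $a\alpha(b+c)=a\alpha b+a\alpha c$; $a(\alpha+\beta)b=a\alpha b+a\beta b$; $a\alpha(b\beta c)=(a\alpha b)\beta c$; $0\alpha a=0=a\alpha0$; $a0b=0=b0a$. A fuzzy h-ideal of $S$ is a map $\mu:S\to[0,1]$, not identically $0$, such that for all $x,y,a,b,z\in S$, $\gamma\in\Gamma$: $\mu(x+y)\ge\min\{\mu(x),\mu(y)\}$; $\mu(x\gamma y)\ge\mu(x)$ and $\mu(x\gamma y)\ge\mu(y)$; $x+a+z=b+z$ implies $\mu(x)\ge\min\{\mu(a),\mu(b)\}$. For fuzzy subsets $\sigma,\theta$, the h-product is $(\sigma\Gamma_h\theta)(x)=\sup\min\{\sigma(a_1),\sigma(a_2),\theta(b_1),\theta(b_2)\}$, the supremum over all $z,a_1,a_2,b_1,b_2\in S$, $\gamma,\delta\in\Gamma$ with $x+a_1\gamma b_1+z=a_2\delta b_2+z$, and $0$ if no such expression exists. Inclusion means pointwise $\le$. A fuzzy h-ideal $\mu$ is prime if it is not constant and for any fuzzy h-ideals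 $\sigma,\theta$, $\sigma\Gamma_h\theta\subseteq\mu$ implies $\sigma\subseteq\mu$ or $\theta\subseteq\mu$. $\mu_0=\{x\in S:\mu(x)=\mu(0)\}$. The extension of $\mu$ by $x$ is $\langle x,\mu\rangle(y)=\inf_{s\in S,\ \alpha,\gamma\in\Gamma}\mu(x\alpha s\gamma y)$. *)

From HB Require Import structures.
From mathcomp Require Import all_boot all_order all_algebra.
From mathcomp Require Import boolp classical_sets reals.
Set Implicit Arguments. Unset Strict Implicit. Unset Printing Implicit Defensive.
Import Order.TTheory GRing.Theory Num.Theory.
Local Open Scope ring_scope.
Local Open Scope classical_set_scope.

Record GammaHemiring := {
  carS : Type;
  carG : Type;
  sadd : carS -> carS -> carS;
  szero : carS;
  gadd : carG -> carG -> carG;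
  gzero : carG;
  gmul : carS -> carG -> carS -> carS;
  saddA : forall a b c, sadd a (sadd b c) = sadd (sadd a b) c;
  saddC : forall a b, sadd a b = sadd b a;
  sadd0 : forall a, sadd szero a = a;
  gaddA : forall a b c, gadd a (gadd b c) = gadd (gadd a b) c;
  gaddC : forall a b, gadd a b = gadd b a;
  gadd0 : forall a, gadd gzero a = a;
  gmulDl : forall a b c al, gmul (sadd a b) al c = sadd (gmul a al c) (gmul b al c);
  gmulDr : forall a b c al, gmul a al (sadd b c) = sadd (gmul a al b) (gmul a al c);
  gmulDm : forall a b al be, gmul a (gadd al be) b = sadd (gmul a al b) (gmul a be b);
  gmulA : forall a b c al be, gmul a al (gmul b be c) = gmul (gmul a al b) be c;
  gmul0l : forall a al, gmul szero al a = szero;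
  gmul0r : forall a al, gmul a al szero = szero;
  gmul0m : forall a b, gmul a gzero b = szero /\ gmul b gzero a = szero
}.

Section Fuzzy.
Variable R : realType.
Variable H : GammaHemiring.
Local Notation S := (carS H).
Local Notation G := (carG H).
Local Notation "a + b" := (sadd a b) : hemi_scope.
Local Notation "a * g * b" := (gmul a g b) : hemi_scope.
Delimit Scope hemi_scope with H.

Definition fuzzy_h_ideal (mu : S -> R) : Prop :=
  (forall x, 0 <= mu x <= 1) /\
  (exists x, mu x != 0) /\
  (forall x y, Num.min (mu x) (mu y) <= mu (x + y)%H) /\
  (forall x y (g : G), mu x <= mu (x * g * y)%H /\ mu y <= mu (x * g * y)%H) /\
  (forall x a b z, (x + a + z)%H = (b + z)%H -> Num.min (mu a) (mu b) <= mu x).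

Definition hprod_set (sg th : S -> R) (x : S) : set R :=
  [set r | exists z a1 a2 b1 b2 (g d : G),
      (x + (a1 * g * b1) + z)%H = ((a2 * d * b2) + z)%H /\
      r = Num.min (Num.min (sg a1) (sg a2)) (Num.min (th b1) (th b2))].

Definition hprod (sg th : S -> R) : S -> R := fun x =>
  if pselect (exists z a1 a2 b1 b2 (g d : G),
                 (x + (a1 * g * b1) + z)%H = ((a2 * d * b2) + z)%H)
  then sup (hprod_set sg th x) else 0.

Definition fincl (sg th : S -> R) : Prop := forall x, sg x <= th x.

Definition prime_fuzzy_h_ideal (mu : S -> R) : Prop :=
  fuzzy_h_ideal mu /\
  ~ (exists c, forall x, mu x = c) /\
  (forall sg th, fuzzy_h_ideal sg -> fuzzy_h_ideal th ->
     fincl (hprod sg th) mu -> fincl sg mu \/ fincl th mu).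

Definition level0 (mu : S -> R) : set S := [set x | mu x = mu (szero H)].

Definition extension (x : S) (mu : S -> R) : S -> R := fun y =>
  inf [set r | exists (s : S) (al g : G), r = mu ((x * al * s) * g * y)%H].

End Fuzzy.

(* A prime fuzzy h-ideal takes the value 1 at 0: otherwise the indicator of
   mu_0 and the constant mu(0) are fuzzy h-ideals whose h-product lies below
   mu, and primeness forces either 1 <= mu(0) or mu to be constant. Since mu
   only grows along Gamma-multiplication, every mu(x a s g y) with x in mu_0
   equals mu(0) = 1, so the infimum defining <x, mu> is 1. *)
From mathcomp Require Import all_boot all_order all_algebra.
From mathcomp Require Import boolp classical_sets reals.
Set Implicit Arguments. Unset Strict Implicit. Unset Printing Implicit Defensive.
Import Order.TTheory GRing.Theory Num.Theory.
Local Open Scope ring_scope.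
Local Open Scope classical_set_scope.

Section FuzzyHIdeal.
Variables (R : realType) (H : GammaHemiring).
Declare Scope hemi_scope.
Local Notation S := (carS H).
Local Notation G := (carG H).
Local Notation "a + b" := (sadd a b) : hemi_scope.
Local Notation "a * g * b" := (gmul a g b) : hemi_scope.
Delimit Scope hemi_scope with H.

Lemma fuzzy_h_ideal_ge0 (mu : S -> R) u : fuzzy_h_ideal mu -> 0 <= mu u.
Proof. by case=> /(_ u) /andP[]. Qed.

Lemma fuzzy_h_ideal_le_at0 (mu : S -> R) u : fuzzy_h_ideal mu -> mu u <= mu (szero H).
Proof.
by case=> _ [_ [_ [/(_ (szero H) u (gzero H)) [_]]]]; rewrite gmul0l.
Qed.

Lemma fuzzy_h_ideal_at0_gt0 (mu : S -> R) : fuzzy_h_ideal mu -> 0 < mu (szero H).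
Proof.
move=> muI; have [_ [[w w_neq0] _]] := muI.
by rewrite (lt_le_trans _ (fuzzy_h_ideal_le_at0 w muI)) // lt0r w_neq0 fuzzy_h_ideal_ge0.
Qed.

Section Level0.
Variables (mu : S -> R) (muI : fuzzy_h_ideal mu).

Lemma level0P u : mu (szero H) <= mu u -> level0 mu u.
Proof. by move=> le0u; apply/le_anti; rewrite le0u fuzzy_h_ideal_le_at0. Qed.

Lemma level0_gmull a g b : level0 mu a -> level0 mu (a * g * b)%H.
Proof.
have [_ [_ [_ [mulI _]]]] := muI.
by rewrite /level0 => mu_a; apply: level0P; rewrite -mu_a (mulI a b g).1.
Qed.

Lemma level0_gmulr a g b : level0 mu b -> level0 mu (a * g * b)%H.
Proof.
have [_ [_ [_ [mulI _]]]] := muI.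
by rewrite /level0 => mu_b; apply: level0P; rewrite -mu_b (mulI a b g).2.
Qed.

Lemma level0_sadd a b : level0 mu a -> level0 mu b -> level0 mu (a + b)%H.
Proof.
have [_ [_ [addI _]]] := muI; rewrite /level0 => mu_a mu_b.
by apply: level0P; have := addI a b; rewrite mu_a mu_b minxx.
Qed.

Lemma level0_hclosed u a b z :
  (u + a + z)%H = (b + z)%H -> level0 mu a -> level0 mu b -> level0 mu u.
Proof.
have [_ [_ [_ [_ hI]]]] := muI; rewrite /level0 => e mu_a mu_b.
by apply: level0P; have := hI u a b z e; rewrite mu_a mu_b minxx.
Qed.

Definition level0_indicator : S -> R :=
  fun u => if `[< level0 mu u >] then 1 else 0.

Lemma level0_indicator_fuzzy_h_ideal : fuzzy_h_ideal level0_indicator.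
Proof.
rewrite /level0_indicator; split; last split; last split; last split.
- by move=> u; case: asboolP; rewrite /= ?lexx ?ler01.
- by exists (szero H); rewrite asboolT ?oner_neq0.
- move=> a b; case: asboolP => a0; case: asboolP => b0; case: asboolP => ab;
    rewrite ?minxx ?ge_min ?lexx ?ler01 ?orbT //.
  by case: ab; apply: level0_sadd.
- move=> a b g; case: (asboolP (level0 mu (a * g * b)%H)) => agb.
    by split; case: asboolP; rewrite ?lexx ?ler01.
  by split; rewrite asboolF // => ?; apply: agb;
    [apply: level0_gmull | apply: level0_gmulr].
- move=> u a b z e; case: asboolP => a0; case: asboolP => b0; case: asboolP => u0;
    rewrite ?minxx ?ge_min ?lexx ?ler01 ?orbT //.
  by case: u0; apply: level0_hclosed e a0 b0.
Qed.

End Level0.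

Lemma cst_fuzzy_h_ideal (c : R) : 0 < c <= 1 -> fuzzy_h_ideal (fun _ : S => c).
Proof.
move=> /andP[c_gt0 c_le1].
split; first by move=> _; rewrite ltW.
split; first by exists (szero H); rewrite gt_eqF.
split; first by move=> *; rewrite minxx.
split; first by move=> *; rewrite lexx.
by move=> *; rewrite minxx.
Qed.

Lemma hprod_le (sg th mu : S -> R) u :
  0 <= mu u -> (forall r, hprod_set sg th u r -> r <= mu u) -> hprod sg th u <= mu u.
Proof.
move=> mu_ge0 ub; rewrite /hprod; case: pselect => // - [z [a1 [a2 [b1 [b2 [g [d e]]]]]]].
apply: ge_sup ub.
by eexists; exists z, a1, a2, b1, b2, g, d; split; [exact: e | reflexivity].
Qed.

Lemma prime_fuzzy_h_ideal_at0 (mu : S -> R) : prime_fuzzy_h_ideal mu -> mu (szero H) = 1.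
Proof.
move=> [muI [mu_ncst mu_prime]].
have mu0_gt0 := fuzzy_h_ideal_at0_gt0 muI.
have [/(_ (szero H)) /andP[_ mu0_le1] _] := muI.
pose th := fun _ : S => mu (szero H).
have thI : fuzzy_h_ideal th by apply: cst_fuzzy_h_ideal; rewrite mu0_gt0.
have sgI := level0_indicator_fuzzy_h_ideal muI.
have prod_le : fincl (hprod (level0_indicator mu) th) mu.
  move=> u; apply: hprod_le (fuzzy_h_ideal_ge0 u muI) _.
  move=> _ [z [a1 [a2 [b1 [b2 [g [d [e ->]]]]]]]].
  have mu_u_ge0 := fuzzy_h_ideal_ge0 u muI.
  rewrite /level0_indicator /th minxx !ge_min.
  case: asboolP => a10; last by rewrite mu_u_ge0.
  case: asboolP => a20; last by rewrite mu_u_ge0 orbT.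
  by rewrite (level0_hclosed muI e) ?lexx ?orbT //; apply: level0_gmull.
case: (mu_prime _ _ sgI thI prod_le) => [sg_le | th_le].
  apply/le_anti; rewrite mu0_le1 /=.
  by have := sg_le (szero H); rewrite /level0_indicator asboolT.
by case: mu_ncst; exists (mu (szero H)) => u; apply/le_anti; rewrite th_le fuzzy_h_ideal_le_at0.
Qed.

Lemma extension_level0 (mu : S -> R) x y :
  fuzzy_h_ideal mu -> level0 mu x -> extension x mu y = mu (szero H).
Proof.
move=> muI x0; rewrite /extension.
suff -> : [set r | exists s (al g : G), r = mu ((x * al * s) * g * y)%H] = [set mu (szero H)].
  exact: inf1.
apply/seteqP; split => r /=.
  by move=> [s [al [g ->]]]; do 2 apply: level0_gmull => //.
move=> ->; exists (szero H), (gzero H), (gzero H).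
by apply/esym; do 2 apply: level0_gmull => //.
Qed.

End FuzzyHIdeal.

Theorem theorem3p22 (R : realType) (H : GammaHemiring) (mu : carS H -> R)
  (x : carS H) :
  prime_fuzzy_h_ideal mu -> level0 mu x ->
  forall y : carS H, extension x mu y = 1.
Proof.
move=> mu_prime x0 y; have [muI _] := mu_prime.
by rewrite extension_level0 // prime_fuzzy_h_ideal_at0.
Qed.
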